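(* Let $f(x_1,x_2)=(-2+x_1+x_2)^2$ and $g(x_1,x_2)=1-x_1^2-x_2^2$; the global minimum of $f$ on $\{x: g(x)\geqslant 0\}$ is $2(3-2\sqrt{2})$. For every integer $d\geqslant 1$, the optimal value of the order-$d$ DSOS relaxation $$\sup_{\lambda,\sigma_0,\sigma_1}\lambda\quad\text{s.t.}\quad f-\lambda=\sigma_0+\sigma_1 g,\ \sigma_0\in\mathrm{DSOS}_d,\ \sigma_1\in\mathrm{DSOS}_{d-1}$$ is at most $4(1-\sqrt{2})$; in particular its gap to the global minimum is at least $2$ at every order, and the DSOS hierarchy does not converge to the global minimum.
   Context: For $\alpha\in\mathbb{N}^2$ write $x^\alpha=x_1^{\alpha_1}x_2^{\alpha_2}$ and $|\alpha|=\alpha_1+\alpha_2$. $\mathrm{DSOS}_d$ denotes the set of finite nonnegative combinations of polynomials of the forms $(x^\alpha)^2$, $(x^\alpha+x^\beta)^2$, $(x^\alpha-x^\beta)^2$ with $|\alpha|,|\beta|\leqslant d$ (diagonally-dominant sums of squares). *)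

From mathcomp Require Import all_boot all_order all_algebra.
From mathcomp Require Import mpoly.
Set Implicit Arguments. Unset Strict Implicit. Unset Printing Implicit Defensive.
Import Order.TTheory GRing.Theory Num.Theory.
Local Open Scope ring_scope.

Section DSOS.
Variable R : rcfType.

Definition x1 : {mpoly R[2]} := 'X_(@Ordinal 2 0 isT).
Definition x2 : {mpoly R[2]} := 'X_(@Ordinal 2 1 isT).

Definition f_ex : {mpoly R[2]} := (-2%:R%:MP + x1 + x2) ^+ 2.
Definition g_ex : {mpoly R[2]} := 1 - x1 ^+ 2 - x2 ^+ 2.

Definition dsos_gen (d : nat) (p : {mpoly R[2]}) : Prop :=
  exists (a b : 'X_{1..2}), (mdeg a <= d)%N /\ (mdeg b <= d)%N /\
    (p = 'X_[a] ^+ 2 \/ p = ('X_[a] + 'X_[b]) ^+ 2 \/ p = ('X_[a] - 'X_[b]) ^+ 2).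

Definition DSOS (d : nat) (p : {mpoly R[2]}) : Prop :=
  exists s : seq (R * {mpoly R[2]}),
    (forall cq, cq \in s -> 0 <= cq.1 /\ dsos_gen d cq.2) /\
    p = \sum_(cq <- s) cq.1 *: cq.2.

Definition dsos_feasible (d : nat) (lam : R) : Prop :=
  exists sigma0 sigma1 : {mpoly R[2]},
    DSOS d sigma0 /\ DSOS d.-1 sigma1 /\
    f_ex - lam%:MP = sigma0 + sigma1 * g_ex.

Definition is_global_min (p q : {mpoly R[2]}) (m : R) : Prop :=
  (exists x : 'I_2 -> R, 0 <= q.@[x] /\ p.@[x] = m) /\
  (forall x : 'I_2 -> R, 0 <= q.@[x] -> m <= p.@[x]).
End DSOS.

(** The bound comes from one linear functional that is nonnegative on every
    DSOS cone but vanishes on the whole ideal generated by [g].  For a point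
    [(x, y)] put
      [L p = (p(x, y) + p(-x, y) + p(x, -y) - p(-x, -y)) / 2].
    The four points are images of [(x, y)] under the sign changes, so a
    monomial takes the values [A, s A, t A, s t A] there; the signed sum of
    squares of two such binomials is [2 (A + B)^2] or [2 (A - B)^2], whence
    [L] is nonnegative on DSOS generators of any degree.  On the unit circle
    all four points are zeros of [g], so [L (sigma1 g) = 0], and
    [f - lam = sigma0 + sigma1 g] forces [lam <= L f].  At
    [x = y = sqrt 2 / 2] this gives [L f = 4 (1 - sqrt 2)]. *)
From mathcomp Require Import all_boot all_order all_algebra.
From mathcomp Require Import mpoly.
From mathcomp Require Import ring lra.
Import Order.TTheory GRing.Theory Num.Theory.
Local Open Scope ring_scope.

Section SignForm.
Variable R : rcfType.
Implicit Types (x y A B : R) (p q : {mpoly R[2]}).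

Definition pt x y : 'I_2 -> R := fun i => if val i == 0%N then x else y.

Definition sign_form x y p : R :=
  (p.@[pt x y] + p.@[pt (- x) y] + p.@[pt x (- y)] - p.@[pt (- x) (- y)]) / 2.

Lemma sign_form0 x y : sign_form x y 0 = 0.
Proof. by rewrite /sign_form !meval0; ring. Qed.

Lemma sign_formD x y p q : sign_form x y (p + q) = sign_form x y p + sign_form x y q.
Proof. by rewrite /sign_form !mevalD; ring. Qed.

Lemma sign_formZ x y a p : sign_form x y (a *: p) = a * sign_form x y p.
Proof. by rewrite /sign_form !mevalZ; ring. Qed.

Lemma sign_formC x y a : sign_form x y a%:MP = a.
Proof. by rewrite /sign_form !mevalC; field. Qed.

Lemma meval_monomial_pt x y (m : 'X_{1..2}) :
  'X_[m].@[pt x y] = x ^+ m ord0 * y ^+ m ord_max.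
Proof.
rewrite mevalX !big_ord_recl big_ord0 mulr1.
by congr (_ * y ^+ m _); apply: val_inj.
Qed.

Definition is_sign (s : R) := s = 1 \/ s = -1.

Lemma is_sign_signr (k : nat) : is_sign ((-1) ^+ k).
Proof. by rewrite -signr_odd; case: (odd k); [right | left]. Qed.

Lemma meval_monomial_sign_change x y (m : 'X_{1..2}) :
  exists s t, [/\ is_sign s, is_sign t,
    'X_[m].@[pt (- x) y] = s * 'X_[m].@[pt x y],
    'X_[m].@[pt x (- y)] = t * 'X_[m].@[pt x y] &
    'X_[m].@[pt (- x) (- y)] = s * t * 'X_[m].@[pt x y]].
Proof.
exists ((-1) ^+ m ord0), ((-1) ^+ m ord_max).
split; try exact: is_sign_signr; rewrite !meval_monomial_pt ?(exprNn x) ?(exprNn y).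
- by rewrite mulrA.
- by rewrite mulrCA.
- by rewrite mulrACA.
Qed.

(* The left side is [2 A^2 + 2 B^2 + 2 A B (2 - (1 - sa sb)(1 - ta tb))], and
   the product is [0] or [4], so it equals [2 (A + B)^2] or [2 (A - B)^2]. *)
Lemma signed_sqr_sum_ge0 A B {sa ta sb tb} :
  is_sign sa -> is_sign ta -> is_sign sb -> is_sign tb ->
  0 <= (A + B) ^+ 2 + (sa * A + sb * B) ^+ 2 + (ta * A + tb * B) ^+ 2
       - (sa * ta * A + sb * tb * B) ^+ 2.
Proof.
have := sqr_ge0 (A - B); have := sqr_ge0 (A + B).
by move=> ? ? [->|->] [->|->] [->|->] [->|->]; lra.
Qed.

Lemma sign_form_binomial_sqr_ge0 x y (a b : 'X_{1..2}) e :
  0 <= sign_form x y (('X_[a] + e *: 'X_[b]) ^+ 2).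
Proof.
have [s [t [ss st a_x a_y a_xy]]] := meval_monomial_sign_change x y a.
have [s' [t' [ss' st' b_x b_y b_xy]]] := meval_monomial_sign_change x y b.
rewrite /sign_form !expr2 !mevalM !mevalD !mevalZ a_x a_y a_xy b_x b_y b_xy.
set A := 'X_[a].@[_]; set B := 'X_[b].@[_].
have := signed_sqr_sum_ge0 A (e * B) ss st ss' st'.
rewrite !expr2; lra.
Qed.

Lemma sign_form_dsos_gen_ge0 x y d q : dsos_gen d q -> 0 <= sign_form x y q.
Proof.
move=> [a [b [_ [_ [-> | [-> | ->]]]]]].
- by have := sign_form_binomial_sqr_ge0 x y a a 0; rewrite scale0r addr0.
- by have := sign_form_binomial_sqr_ge0 x y a b 1; rewrite scale1r.
- by have := sign_form_binomial_sqr_ge0 x y a b (-1); rewrite scaleN1r.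
Qed.

Lemma sign_form_dsos_ge0 x y d p : DSOS d p -> 0 <= sign_form x y p.
Proof.
move=> [s [gen_s ->]].
rewrite (big_morph _ (sign_formD x y) (sign_form0 x y)) big_seq sumr_ge0 // => cq s_cq.
have [c_ge0 gen_q] := gen_s cq s_cq.
by rewrite sign_formZ mulr_ge0 // (sign_form_dsos_gen_ge0 x y _ _ gen_q).
Qed.

Lemma meval_x1 (v : 'I_2 -> R) : (x1 R).@[v] = v ord0.
Proof. by rewrite mevalXU; congr v; apply: val_inj. Qed.

Lemma meval_x2 (v : 'I_2 -> R) : (x2 R).@[v] = v ord_max.
Proof. by rewrite mevalXU; congr v; apply: val_inj. Qed.

Lemma meval_g_ex (v : 'I_2 -> R) : (g_ex R).@[v] = 1 - v ord0 ^+ 2 - v ord_max ^+ 2.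
Proof. by rewrite /g_ex !mevalB meval1 !rmorphXn /= meval_x1 meval_x2. Qed.

Lemma meval_f_ex (v : 'I_2 -> R) : (f_ex R).@[v] = (v ord0 + v ord_max - 2) ^+ 2.
Proof. by rewrite /f_ex rmorphXn /= !mevalD mevalN mevalC meval_x1 meval_x2; ring. Qed.

Lemma sign_form_mul_g_ex x y s :
  x ^+ 2 + y ^+ 2 = 1 -> sign_form x y (s * g_ex R) = 0.
Proof.
move=> on_circle; rewrite /sign_form !mevalM !meval_g_ex /pt /= !sqrrN.
have -> : 1 - x ^+ 2 - y ^+ 2 = 0 by rewrite -on_circle; ring.
by rewrite !mulr0 !addr0 subr0 mul0r.
Qed.

Lemma sign_form_f_ex x y :
  sign_form x y (f_ex R) = x ^+ 2 + y ^+ 2 + 4 - 2 * x * y - 4 * x - 4 * y.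
Proof. by rewrite /sign_form !meval_f_ex /pt /=; field. Qed.

Lemma dsos_feasible_le_sign_form d lam x y :
  x ^+ 2 + y ^+ 2 = 1 -> dsos_feasible d lam -> lam <= sign_form x y (f_ex R).
Proof.
move=> on_circle [s0 [s1 [dsos_s0 [_ cert]]]].
have := congr1 (sign_form x y) cert.
rewrite -scaleN1r sign_formD sign_formZ sign_formC.
rewrite sign_formD sign_form_mul_g_ex // addr0.
have := sign_form_dsos_ge0 x y _ _ dsos_s0; lra.
Qed.

End SignForm.

Section Sqrt2.
Variable R : rcfType.
Local Notation r := (Num.sqrt (2 : R)).

Lemma sqr_sqrt2 : r ^+ 2 = 2.
Proof. by rewrite sqr_sqrtr // ler0n. Qed.

Lemma sqrt2_lt2 : r < 2.
Proof. by have := sqr_sqrt2; have := sqrtr_ge0 (2 : R); rewrite expr2; nra. Qed.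

Lemma dsos_feasible_le d lam : dsos_feasible d lam -> lam <= 4 * (1 - r).
Proof.
have half_sq : (r / 2) ^+ 2 = 1 / 2 by rewrite expr_div_n sqr_sqrt2; field.
have on_circle : (r / 2) ^+ 2 + (r / 2) ^+ 2 = 1 by rewrite half_sq; field.
move/(@dsos_feasible_le_sign_form R d lam _ _ on_circle); rewrite sign_form_f_ex half_sq.
have := sqr_sqrt2; rewrite !expr2 => r_sq; lra.
Qed.

Lemma add_le_sqrt2 (u v : R) : u ^+ 2 + v ^+ 2 <= 1 -> u + v <= r.
Proof.
move=> in_disk; apply: le_trans (ler_norm _) _.
rewrite -sqrtr_sqr ler_wsqrtr //.
have := sqr_ge0 (u - v); rewrite !expr2 in in_disk *; lra.
Qed.

Lemma is_global_min_f_ex : is_global_min (f_ex R) (g_ex R) (2 * (3 - 2 * r)).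
Proof.
have := sqr_sqrt2; rewrite expr2 => r_sq.
split.
- exists (pt R (r / 2) (r / 2)).
  rewrite meval_g_ex meval_f_ex /pt /= !expr2; split; [lra | nra].
- move=> v; rewrite meval_g_ex meval_f_ex => in_disk.
  have uv_le : v ord0 + v ord_max <= r.
    by apply: add_le_sqrt2; lra.
  have := sqrt2_lt2; nra.
Qed.

End Sqrt2.

Theorem mainTheorem5 (R : rcfType) :
  is_global_min (f_ex R) (g_ex R) (2 * (3 - 2 * Num.sqrt 2)) /\
  (forall (d : nat), (1 <= d)%N -> forall lam : R, dsos_feasible d lam ->
     lam <= 4 * (1 - Num.sqrt 2)) /\
  (forall (d : nat), (1 <= d)%N -> forall lam : R, dsos_feasible d lam ->
     2 <= 2 * (3 - 2 * Num.sqrt 2) - lam).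
Proof.
split; first exact: is_global_min_f_ex.
split=> d _ lam /dsos_feasible_le // lam_le.
lra.
Qed.
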